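(* Let $A, B, C, F \in \mathbb{R}^{n\times n}$ with $C$ invertible, and consider the matrix equation $$AX + B\lvert CX\rvert = F$$ in the unknown $X \in \mathbb{R}^{n\times n}$. Let $I$ be the $n\times n$ identity matrix and set $R = I\otimes AC^{-1}$ and $S = I\otimes B$ (matrices of size $n^2\times n^2$). The equation has exactly one solution if any one of the following holds: (i) the set $\{R+S,\ R-S\}$ has the column $\mathcal{W}$-property; (ii) $R+S$ is invertible and the set $\{I_{n^2},\ (R+S)^{-1}(R-S)\}$ has the column $\mathcal{W}$-property, where $I_{n^2}$ is the identity matrix of order $n^2$; (iii) $R+S$ is invertible and $(R+S)^{-1}(R-S)$ is a P-matrix; (iv) for all nonnegative diagonal matrices $F_1, F_2 \in \mathbb{R}^{n^2\times n^2}$ with all diagonal entries of $F_1+F_2$ positive, the matrix $(R+S)F_1 + (R-S)F_2$ is invertible.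
   Context: $\otimes$ denotes the Kronecker product and $\lvert M\rvert$ the entrywise absolute value. For a set $\mathcal{M}=\{M_1,M_2\}$ of $N\times N$ matrices, a column representative of $\mathcal{M}$ is a matrix $R'$ whose $j$-th column is either the $j$-th column of $M_1$ or the $j$-th column of $M_2$, for each $j=1,\dots,N$. The set $\mathcal{M}$ has the column $\mathcal{W}$-property if every column representative of $\mathcal{M}$ has positive determinant. A P-matrix is a square matrix all of whose principal minors are positive. *)

From HB Require Import structures.
From mathcomp Require Import all_boot all_order all_algebra.
From mathcomp Require Export mxtens.
Set Implicit Arguments. Unset Strict Implicit. Unset Printing Implicit Defensive.
Import Order.TTheory GRing.Theory Num.Theory.
Local Open Scope ring_scope.

(* Kronecker product: tensmx (notation A *t B) from mathcomp-real-closed's mxtens;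
   (A *t B) (i*p + j) (k*q + l) = A i k * B j l, the standard convention. *)

Definition absmx (R : numDomainType) m n (M : 'M[R]_(m, n)) : 'M[R]_(m, n) :=
  map_mx (fun x => `|x|) M.

Definition col_rep (R : Type) N (M1 M2 : 'M[R]_N) (b : 'I_N -> bool) : 'M[R]_N :=
  \matrix_(i, j) (if b j then M1 i j else M2 i j).

Definition column_W_property (R : numDomainType) N (M1 M2 : 'M[R]_N) : Prop :=
  forall b : 'I_N -> bool, 0 < \det (col_rep M1 M2 b).

Definition principal_submx (R : Type) N (M : 'M[R]_N) (J : {set 'I_N}) : 'M[R]_#|J| :=
  \matrix_(i, j) M (enum_val i) (enum_val j).

Definition P_matrix (R : numDomainType) N (M : 'M[R]_N) : Prop :=
  forall J : {set 'I_N}, J != set0 -> 0 < \det (principal_submx M J).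

Definition nonneg_diag (R : numDomainType) N (D : 'M[R]_N) : Prop :=
  is_diag_mx D /\ forall i, 0 <= D i i.

From HB Require Import structures.
From mathcomp Require Import all_boot all_order all_algebra.
From mathcomp Require Import mxtens.
From mathcomp Require Import ring lra.
Import Order.TTheory GRing.Theory Num.Theory.
Local Open Scope ring_scope.
Set Implicit Arguments. Unset Strict Implicit.

(* Writing [Y = C X] and vectorising column by column turns the equation into the
   absolute value equation [R y + S |y| = vec F], since [vec (M Y) = (1 *t M) vec Y].
   Splitting [y = u - v] into positive and negative parts, its solutions correspond
   one-to-one to those of the horizontal LCP [(R + S) u - (R - S) v = f], [u, v >= 0],
   [u_i v_i = 0].
   Each of (i)-(iv) makes every column-wise convex combination of [R + S] and [R - S]
   invertible (in (i)-(iii) its determinant is affine in each column weight and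
   positive at the vertices, which are column representatives), and this forces
   [(R + S) a = (R - S) b] with [a_j b_j <= 0] for all [j] to have only the zero solution.
   That gives uniqueness for the LCP at once, and existence by induction on the number
   of complementarity conditions imposed: pin [v_i = 0], or else [u_i = 0]; if both
   choices give the wrong sign at [i], the difference of the two solutions is a nonzero
   solution of the homogeneous system above. *)

Lemma unitmx_ker0 (F : fieldType) n (A : 'M[F]_n) :
  (forall c : 'cV[F]_n, A *m c = 0 -> c = 0) -> A \in unitmx.
Proof.
move=> ker0; rewrite unitmxE unitfE -det_tr; apply/negP => /det0P [c c_neq0 cA0].
have : A *m c^T = 0 by rewrite -[A]trmxK -trmx_mul cA0 trmx0.
by move/ker0/eqP; rewrite trmx_eq0 (negbTE c_neq0).
Qed.

Lemma complementary_sub_mul_le0 (R : realDomainType) (a b a' b' : R) :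
  0 <= a -> 0 <= b -> a * b = 0 -> 0 <= a' -> 0 <= b' -> a' * b' = 0 ->
  (a - a') * (b - b') <= 0.
Proof.
move=> a_ge0 b_ge0 ab0 a'_ge0 b'_ge0 a'b'0.
have -> : (a - a') * (b - b') = - (a * b' + a' * b).
  by rewrite mulrBl !mulrBr ab0 a'b'0; ring.
by rewrite oppr_le0 addr_ge0 // mulr_ge0.
Qed.

Lemma div_sub_itv01 (R : realFieldType) (a b : R) :
  a * b <= 0 -> a != b -> 0 <= a / (a - b) <= 1.
Proof.
move=> ab_le0 a_neq_b; have sq_gt0 : 0 < (a - b) ^+ 2 by rewrite exprn_even_gt0 ?subr_eq0.
have -> : a / (a - b) = a * (a - b) / (a - b) ^+ 2 by field; rewrite subr_eq0.
apply/andP; split; first by apply: divr_ge0; nra.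
by rewrite ler_pdivrMr // mul1r; nra.
Qed.

Section HorizontalLCP.
Variables (K : realFieldType) (N : nat).
Implicit Types (P Q : 'M[K]_N) (a b c f u v : 'cV[K]_N) (U L : {set 'I_N}).

(* With [Q = 1] this says that [P] reverses the sign of no nonzero vector, the
   classical characterisation of P-matrices. *)
Definition sign_nonreversing P Q := forall a b,
  P *m a = Q *m b -> (forall j, a j 0 * b j 0 <= 0) -> a = 0 /\ b = 0.

(* The horizontal LCP  P u - Q v = f, u, v >= 0, u _|_ v, with complementarity
   imposed only on L; off L, v_i = 0 when i \in U and u_i = 0 otherwise. *)
Definition hlcp_sol P Q f U L u v :=
  P *m u - Q *m v = f /\
  forall i, if i \in L then [/\ 0 <= u i 0, 0 <= v i 0 & u i 0 * v i 0 = 0]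
            else if i \in U then v i 0 = 0 else u i 0 = 0.

Lemma hlcp_sol_sub P Q f U U' L L' u v u' v' :
  hlcp_sol P Q f U L u v -> hlcp_sol P Q f U' L' u' v' ->
  P *m (u - u') = Q *m (v - v').
Proof.
move=> [e _] [e' _]; apply/eqP; rewrite !mulmxBr -subr_eq0.
have -> : P *m u - P *m u' - (Q *m v - Q *m v') = (P *m u - Q *m v) - (P *m u' - Q *m v').
  by rewrite !opprB addrACA [RHS]addrACA [- _ - Q *m v]addrC.
by rewrite e e' subrr.
Qed.

Lemma hlcp_sol_sub_mul_le0 P Q f U U' L u v u' v' j :
  hlcp_sol P Q f U L u v -> hlcp_sol P Q f U' L u' v' ->
  (j \in L) || ((j \in U) == (j \in U')) -> (u - u') j 0 * (v - v') j 0 <= 0.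
Proof.
move=> [_ /(_ j) sol_j] [_ /(_ j) sol'_j]; rewrite !mxE.
case: (j \in L) sol_j sol'_j => [[? ? ?] [? ? ?] _|]; first exact: complementary_sub_mul_le0.
by case: (j \in U); case: (j \in U') => // -> ->; rewrite subrr ?mulr0 ?mul0r.
Qed.

Lemma hlcp_sol_unique P Q f U U' u v u' v' : sign_nonreversing P Q ->
  hlcp_sol P Q f U setT u v -> hlcp_sol P Q f U' setT u' v' -> u = u' /\ v = v'.
Proof.
move=> nonrev sol sol'.
suff : u - u' = 0 /\ v - v' = 0 by case=> /subr0_eq -> /subr0_eq ->.
apply: nonrev (hlcp_sol_sub sol sol') _ => j.
by apply: hlcp_sol_sub_mul_le0 sol sol' _; rewrite in_setT.
Qed.

Definition restrict_cV U c : 'cV[K]_N := \col_j (if j \in U then c j 0 else 0).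

Definition pick_col P Q U : 'M[K]_N :=
  \matrix_(i, j) (if j \in U then P i j else - Q i j).

Lemma pick_colE P Q U c :
  pick_col P Q U *m c = P *m restrict_cV U c - Q *m restrict_cV (~: U) c.
Proof.
apply/matrixP => i k; rewrite [k]ord1 !mxE -sumrB; apply: eq_bigr => j _.
by rewrite !mxE in_setC; case: (j \in U); rewrite /= ?mulr0 ?subr0 ?sub0r ?mulNr.
Qed.

Lemma restrict_cV_setC U c : restrict_cV U c + restrict_cV (~: U) c = c.
Proof.
by apply/matrixP => j k; rewrite [k]ord1 !mxE in_setC; case: (j \in U); rewrite ?addr0 ?add0r.
Qed.

Lemma pick_col_unit P Q U : sign_nonreversing P Q -> pick_col P Q U \in unitmx.
Proof.
move=> nonrev; apply: unitmx_ker0 => c; rewrite pick_colE => /eqP; rewrite subr_eq0 => /eqP e.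
have [c1 c2] : restrict_cV U c = 0 /\ restrict_cV (~: U) c = 0.
  apply: nonrev e _ => j.
  by rewrite !mxE in_setC; case: (j \in U); rewrite ?mulr0 ?mul0r.
by rewrite -(restrict_cV_setC U c) c1 c2 addr0.
Qed.

Lemma hlcp_sol_set0 P Q f U : sign_nonreversing P Q -> exists u v, hlcp_sol P Q f U set0 u v.
Proof.
move=> nonrev; set c := invmx (pick_col P Q U) *m f.
exists (restrict_cV U c), (restrict_cV (~: U) c); split.
  by rewrite -pick_colE mulKVmx // pick_col_unit.
by move=> i; rewrite in_set0 !mxE in_setC; case: (i \in U).
Qed.

Lemma hlcp_sol_setD1 P Q f U U' L u v i : i \in L ->
  (forall j, j != i -> (j \in U') = (j \in U)) -> hlcp_sol P Q f U' (L :\ i) u v ->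
  0 <= u i 0 -> 0 <= v i 0 -> u i 0 * v i 0 = 0 -> hlcp_sol P Q f U L u v.
Proof.
move=> iL eqU [e sol] ui_ge0 vi_ge0 uvi0; split => // j.
have [-> | ji] := eqVneq j i; first by rewrite iL.
by have := sol j; rewrite in_setD1 ji /= eqU.
Qed.

Lemma hlcp_sol_extend P Q f U L i : sign_nonreversing P Q -> i \in L ->
  (forall U', exists u v, hlcp_sol P Q f U' (L :\ i) u v) ->
  exists u v, hlcp_sol P Q f U L u v.
Proof.
move=> nonrev iL IH.
have [u [v solU]] := IH (i |: U); have [_ /(_ i)] := solU.
rewrite setD11 setU11 => vi0.
have [ui_ge0 | ui_lt0] := lerP 0 (u i 0).
  exists u, v; apply: hlcp_sol_setD1 iL _ solU ui_ge0 _ _; rewrite ?vi0 ?mulr0 //.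
  by move=> j ji; rewrite in_setU1 (negbTE ji).
have [u' [v' solU']] := IH (U :\ i); have [_ /(_ i)] := solU'.
rewrite !setD11 => u'i0.
have [v'i_ge0 | v'i_lt0] := lerP 0 (v' i 0).
  exists u', v'; apply: hlcp_sol_setD1 iL _ solU' _ v'i_ge0 _; rewrite ?u'i0 ?mul0r //.
  by move=> j ji; rewrite in_setD1 ji.
have [/subr0_eq uu' _] : u - u' = 0 /\ v - v' = 0.
  apply: nonrev (hlcp_sol_sub solU solU') _ => j.
  have [-> | ji] := eqVneq j i; first by rewrite !mxE vi0 u'i0 subr0 sub0r; nra.
  apply: hlcp_sol_sub_mul_le0 solU solU' _.
  by rewrite in_setU1 !in_setD1 (negbTE ji) /= eqxx orbT.
by move: ui_lt0; rewrite uu' u'i0 ltxx.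
Qed.

Lemma hlcp_sol_exists P Q f U L : sign_nonreversing P Q -> exists u v, hlcp_sol P Q f U L u v.
Proof.
move=> nonrev; have [k cardL] : {k | #|L| = k} by exists #|L|.
elim: k L U cardL => [|k IH] L U cardL.
  by rewrite (cards0_eq cardL); apply: hlcp_sol_set0.
have /card_gt0P [i iL] : (0 < #|L|)%N by rewrite cardL.
have cardLi : #|L :\ i| = k by move: cardL; rewrite (cardsD1 i) iL add1n => -[].
by apply: hlcp_sol_extend nonrev iL _ => U'; apply: IH.
Qed.

End HorizontalLCP.

Section AbsoluteValueEquation.
Variables (K : realFieldType) (N : nat).
Implicit Types (R S : 'M[K]_N) (f u v y : 'cV[K]_N).

Definition pos_part y := 2^-1 *: (absmx y + y).
Definition neg_part y := 2^-1 *: (absmx y - y).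

Lemma pos_part_sub_neg_part y : pos_part y - neg_part y = y.
Proof. by apply/matrixP => i j; rewrite !mxE; field. Qed.

Lemma pos_part_add_neg_part y : pos_part y + neg_part y = absmx y.
Proof. by apply/matrixP => i j; rewrite !mxE; field. Qed.

Lemma pos_neg_part_compl y i :
  [/\ 0 <= pos_part y i 0, 0 <= neg_part y i 0 & pos_part y i 0 * neg_part y i 0 = 0].
Proof.
rewrite !mxE; have y_le := ler_norm (y i 0); have Ny_le := ler_norm (- y i 0).
rewrite normrN in Ny_le.
have sq : `|y i 0| ^+ 2 = y i 0 ^+ 2 by rewrite real_normK ?num_real.
split; try by apply: mulr_ge0; [rewrite invr_ge0 ler0n | lra].
have -> : 2^-1 * (`|y i 0| + y i 0) * (2^-1 * (`|y i 0| - y i 0)) =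
  2^-1 * 2^-1 * (`|y i 0| ^+ 2 - y i 0 ^+ 2) by ring.
by rewrite sq subrr mulr0.
Qed.

Lemma absmx_sub_compl u v :
  (forall i, [/\ 0 <= u i 0, 0 <= v i 0 & u i 0 * v i 0 = 0]) -> absmx (u - v) = u + v.
Proof.
move=> compl; apply/matrixP => i k; rewrite [k]ord1 !mxE.
have [u_ge0 v_ge0 /eqP] := compl i; rewrite mulf_eq0 => /orP[] /eqP ->.
  by rewrite sub0r normrN add0r ger0_norm.
by rewrite subr0 addr0 ger0_norm.
Qed.

Lemma hlcp_gaveE R S u v : (R + S) *m u - (R - S) *m v = R *m (u - v) + S *m (u + v).
Proof.
by rewrite mulmxDl mulmxBl mulmxBr mulmxDr opprB [RHS]addrACA [- _ + _]addrC.
Qed.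

Lemma gave_exists_unique R S f : sign_nonreversing (R + S) (R - S) ->
  exists! y, R *m y + S *m absmx y = f.
Proof.
move=> nonrev; have [u [v [e compl]]] := hlcp_sol_exists f set0 setT nonrev.
exists (u - v); split.
  rewrite absmx_sub_compl -?hlcp_gaveE // => i.
  by have := compl i; rewrite in_setT.
move=> y ey; have sol_y : hlcp_sol (R + S) (R - S) f set0 setT (pos_part y) (neg_part y).
  split; first by rewrite hlcp_gaveE pos_part_sub_neg_part pos_part_add_neg_part.
  by move=> i; rewrite in_setT; apply: pos_neg_part_compl.
have [-> ->] := hlcp_sol_unique nonrev (conj e compl) sol_y.
exact: pos_part_sub_neg_part.
Qed.

End AbsoluteValueEquation.

Section ConvexColumnCombinations.
Variables (K : realFieldType) (N : nat).
Implicit Types (P Q M : 'M[K]_N) (t : 'I_N -> K).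

Definition convex_col_mx P Q t : 'M[K]_N :=
  \matrix_(i, j) (t j * P i j + (1 - t j) * Q i j).

Lemma convex_col_mxE P Q t :
  convex_col_mx P Q t = P *m diag_mx (\row_j t j) + Q *m diag_mx (\row_j (1 - t j)).
Proof. by apply/matrixP => i j; rewrite !mul_mx_diag !mxE; ring. Qed.

Lemma convex_col_mx_mull M P Q t :
  convex_col_mx (M *m P) (M *m Q) t = M *m convex_col_mx P Q t.
Proof. by rewrite !convex_col_mxE mulmxDr !mulmxA. Qed.

Definition convex_col_unit P Q :=
  forall t, (forall j, 0 <= t j <= 1) -> convex_col_mx P Q t \in unitmx.

Lemma convex_col_unit_mulKV M Q :
  M \in unitmx -> convex_col_unit 1%:M (invmx M *m Q) -> convex_col_unit M Q.
Proof.
move=> Mu cu t t01; rewrite -(mulKVmx Mu Q) -{1}[M]mulmx1 convex_col_mx_mull.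
by rewrite unitmx_mul Mu cu.
Qed.

Lemma convex_col_unit_nonreversing P Q : convex_col_unit P Q -> sign_nonreversing P Q.
Proof.
(* [t_j = a_j / (a_j - b_j)] lies in [[0, 1]] because [a_j b_j <= 0], and it makes
   [convex_col_mx P Q t] map [a - b] to [P a - Q b = 0]. *)
move=> cu a b PaQb ab_le0; have [c cE] : {c : 'cV[K]_N | c = a - b} by exists (a - b).
have c0 j : c j 0 = 0 -> a j 0 = 0 /\ b j 0 = 0.
  rewrite cE !mxE => /subr0_eq ab; have := ab_le0 j; rewrite ab => bb_le0.
  have b0 : b j 0 = 0 by nra.
  by rewrite b0.
pose t j := if c j 0 == 0 then 1 else a j 0 / c j 0.
have t01 j : 0 <= t j <= 1.
  rewrite /t; case: eqP => [_ | /eqP]; first by rewrite ler01 lexx.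
  by rewrite cE !mxE subr_eq0; apply: div_sub_itv01.
have ta : diag_mx (\row_j t j) *m c = a.
  apply/matrixP => j k; rewrite [k]ord1 mul_diag_mx !mxE /t.
  case: eqP => [cj0 | /eqP cj_neq0]; last by rewrite divfK.
  by rewrite cj0 (c0 _ cj0).1 mulr0.
have tb : diag_mx (\row_j (1 - t j)) *m c = - b.
  apply/matrixP => j k; rewrite [k]ord1 mul_diag_mx !mxE /t.
  case: eqP => [cj0 | /eqP cj_neq0]; first by rewrite subrr mul0r (c0 _ cj0).2 oppr0.
  by rewrite mulrBl mul1r divfK // cE !mxE; ring.
have : convex_col_mx P Q t *m c = 0.
  by rewrite convex_col_mxE mulmxDl -!mulmxA ta tb mulmxN PaQb subrr.
move/(congr1 (mulmx (invmx (convex_col_mx P Q t)))); rewrite mulKmx ?cu // mulmx0 => c_eq0.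
have ab0 j : a j 0 = 0 /\ b j 0 = 0 by apply: c0; rewrite c_eq0 mxE.
by split; apply/matrixP => j k; rewrite [k]ord1 mxE; case: (ab0 j).
Qed.

Lemma det_convex_col_mx_split P Q t j :
  \det (convex_col_mx P Q t) = t j * \det (convex_col_mx P Q [eta t with j |-> 1])
                               + (1 - t j) * \det (convex_col_mx P Q [eta t with j |-> 0]).
Proof.
rewrite -det_tr -[\det (convex_col_mx P Q [eta t with j |-> 1])]det_tr.
rewrite -[\det (convex_col_mx P Q [eta t with j |-> 0])]det_tr.
apply: (determinant_multilinear (i0 := j)).
- by apply/matrixP => i l; rewrite !mxE /= eqxx; ring.
- by apply/matrixP => i l; rewrite !mxE /= eq_sym (negbTE (neq_lift _ _)).
- by apply/matrixP => i l; rewrite !mxE /= eq_sym (negbTE (neq_lift _ _)).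
Qed.

Definition frac_support t := [set j | (t j != 0) && (t j != 1)].

Lemma column_W_det_convex_col_gt0 P Q t : column_W_property P Q ->
  (forall j, 0 <= t j <= 1) -> 0 < \det (convex_col_mx P Q t).
Proof.
move=> W; have [k] := ubnP #|frac_support t|; elim: k t => // k IH t card_lt t01.
case: (set_0Vmem (frac_support t)) => [no_frac | [j]].
  have -> : convex_col_mx P Q t = col_rep P Q (fun j => t j == 1).
    apply/matrixP => i l; rewrite !mxE; have : l \notin frac_support t by rewrite no_frac in_set0.
    rewrite inE negb_and !negbK => /orP[] /eqP ->.
      by rewrite eq_sym oner_eq0 mul0r add0r subr0 mul1r.
    by rewrite eqxx subrr mul0r addr0 mul1r.
  exact: W.
rewrite inE => /andP[tj_neq0 tj_neq1].
have t_upd01 x : 0 <= x <= 1 -> forall l, 0 <= [eta t with j |-> x] l <= 1.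
  by move=> x01 l /=; case: eqP.
have card_upd x : (x == 0) || (x == 1) -> (#|frac_support [eta t with j |-> x]| < k)%N.
  move=> x01; apply: leq_ltn_trans (subset_leq_card (_ : _ \subset frac_support t :\ j)) _.
    apply/subsetP => l; rewrite !inE /=; have [-> | //] := eqVneq l j.
    by case/orP: x01 => /eqP -> /andP[]; rewrite eqxx.
  by move: card_lt; rewrite (cardsD1 j) inE tj_neq0 tj_neq1 add1n ltnS.
have tj_gt0 : 0 < t j by rewrite lt_def tj_neq0; case/andP: (t01 j).
have tj_lt1 : t j < 1 by rewrite lt_def eq_sym tj_neq1; case/andP: (t01 j).
rewrite (det_convex_col_mx_split _ _ _ j) addr_gt0 // mulr_gt0 ?subr_gt0 //.
  by apply: IH; [rewrite card_upd ?eqxx ?orbT | apply: t_upd01; rewrite ler01 lexx].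
by apply: IH; [rewrite card_upd ?eqxx | apply: t_upd01; rewrite lexx ler01].
Qed.

Lemma column_W_convex_col_unit P Q : column_W_property P Q -> convex_col_unit P Q.
Proof.
by move=> W t t01; rewrite unitmxE unitfE gt_eqF ?column_W_det_convex_col_gt0.
Qed.

Lemma diag_unit_convex_col_unit P Q :
  (forall F1 F2 : 'M[K]_N, nonneg_diag F1 -> nonneg_diag F2 ->
     (forall i, 0 < F1 i i + F2 i i) -> P *m F1 + Q *m F2 \in unitmx) ->
  convex_col_unit P Q.
Proof.
move=> diag_unit t t01; rewrite convex_col_mxE; apply: diag_unit.
- split=> [|i]; first exact: diag_mx_is_diag.
  by rewrite !mxE eqxx mulr1n; case/andP: (t01 i).
- split=> [|i]; first exact: diag_mx_is_diag.
  by rewrite !mxE eqxx mulr1n subr_ge0; case/andP: (t01 i).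
- by move=> i; rewrite !mxE !eqxx !mulr1n addrC subrK ltr01.
Qed.

End ConvexColumnCombinations.

Lemma det_mxsub_bij (R : comPzRingType) n m (X : 'M[R]_n) (f : 'I_m -> 'I_n) :
  bijective f -> \det (mxsub f f X) = \det X.
Proof.
move=> f_bij; have m_eq_n : m = n by have := bij_eq_card f_bij; rewrite !card_ord.
subst m; pose s := perm.perm (bij_inj f_bij).
have -> : mxsub f f X = row_perm s (col_perm s X) by apply/matrixP => i j; rewrite !mxE !perm.permE.
rewrite row_permE col_permE !det_mulmx !det_perm perm.odd_permV.
by rewrite mulrCA -expr2 sqrr_sign mulr1.
Qed.

Lemma det_col_rep_1l (R : comPzRingType) N (P : 'M[R]_N) (b : 'I_N -> bool) :
  \det (col_rep 1%:M P b) = \det (principal_submx P [set j | ~~ b j]).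
Proof.
set J := [set j | ~~ b j].
pose f (k : 'I_(#|J| + #|~: J|)) : 'I_N :=
  match split k with inl j => enum_val j | inr j => enum_val j end.
have fl j : f (lshift _ j) = enum_val j by rewrite /f (unsplitK (inl _ j)).
have fr j : f (rshift _ j) = enum_val j by rewrite /f (unsplitK (inr _ j)).
have f_bij : bijective f.
  have f_inj : injective f.
    move=> k k'; rewrite -[k]splitK -[k']splitK.
    case: (split k) => j; case: (split k') => j'; rewrite ?fl ?fr => e.
    - by rewrite (enum_val_inj e).
    - by have := enum_valP j'; rewrite -e in_setC enum_valP.
    - by have := enum_valP j; rewrite e in_setC enum_valP.
    - by rewrite (enum_val_inj e).
  by apply: (inj_card_bij f_inj); rewrite !card_ord cardsC card_ord.
have bJ (j : 'I_#|J|) : b (enum_val j) = false by have := enum_valP j; rewrite inE => /negbTE.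
have bJC (j : 'I_#|~: J|) : b (enum_val j) by have := enum_valP j; rewrite !inE negbK.
rewrite -(det_mxsub_bij _ f_bij) -[mxsub f f _]submxK.
have -> : ulsubmx (mxsub f f (col_rep 1%:M P b)) = principal_submx P J.
  by apply/matrixP => i j; rewrite !mxE !fl bJ.
have -> : ursubmx (mxsub f f (col_rep 1%:M P b)) = 0.
  apply/matrixP => i j; rewrite !mxE fl fr bJC; case: eqP => // e.
  by have := enum_valP j; rewrite -e in_setC enum_valP.
have -> : drsubmx (mxsub f f (col_rep 1%:M P b)) = 1%:M.
  by apply/matrixP => i j; rewrite !mxE !fr bJC (inj_eq enum_val_inj).
by rewrite det_lblock det1 mulr1.
Qed.

Lemma P_matrix_column_W (K : numDomainType) N (P : 'M[K]_N) :
  P_matrix P -> column_W_property 1%:M P.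
Proof.
move=> PP b; have [J0 | ] := eqVneq [set j | ~~ b j] set0; last by rewrite det_col_rep_1l; apply: PP.
suff -> : col_rep 1%:M P b = 1%:M by rewrite det1 ltr01.
apply/matrixP => i j; rewrite !mxE; have : j \notin [set j | ~~ b j] by rewrite J0 in_set0.
by rewrite inE negbK => ->.
Qed.

Section Vectorization.
Variables (K : numDomainType) (n : nat).

(* Column stacking: block [i] of [vec Y] (in the [mxtens_index] numbering used by
   [*t]) is the [i]-th column of [Y]. *)
Definition vec (Y : 'M[K]_n) : 'cV[K]_(n * n) :=
  \col_k Y (mxtens_unindex k).2 (mxtens_unindex k).1.

Definition unvec (y : 'cV[K]_(n * n)) : 'M[K]_n :=
  \matrix_(i, j) y (mxtens_index (j, i)) 0.

Lemma vecK : cancel vec unvec.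
Proof. by move=> Y; apply/matrixP => i j; rewrite !mxE mxtens_indexK. Qed.

Lemma unvecK : cancel unvec vec.
Proof.
move=> y; apply/matrixP => k z; rewrite [z]ord1 !mxE.
by case: (mxtens_indexP k) => i j; rewrite mxtens_indexK.
Qed.

Lemma vecD Y1 Y2 : vec (Y1 + Y2) = vec Y1 + vec Y2.
Proof. by apply/matrixP => k z; rewrite !mxE. Qed.

Lemma vec_absmx Y : vec (absmx Y) = absmx (vec Y).
Proof. by apply/matrixP => k z; rewrite !mxE. Qed.

Lemma vec_tens1mx_mul (M Y : 'M[K]_n) : (1%:M *t M) *m vec Y = vec (M *m Y).
Proof.
apply/matrixP => k z; rewrite [z]ord1; case: (mxtens_indexP k) => i j.
rewrite !mxE mxtens_indexK /=.
rewrite (reindex _ (onW_bij _ (Bijective (@mxtens_indexK n n) (@mxtens_unindexK n n)))) /=.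
transitivity (\sum_(a < n) \sum_(l < n) ((i == a)%:R * (M j l * Y l a))).
  rewrite pair_bigA; apply: eq_bigr => -[a l] _ /=.
  by rewrite tensmxE !mxE mxtens_indexK /= mulrA.
rewrite (bigD1 i) //= [X in _ + X]big1 => [|a ai].
  by rewrite addr0; apply: eq_bigr => l _; rewrite eqxx mul1r.
by apply: big1 => l _; rewrite eq_sym (negbTE ai) mul0r.
Qed.

End Vectorization.

Unset Implicit Arguments.

Theorem theorem4p3 (K : realFieldType) (n : nat) (A B C F : 'M[K]_n) :
  C \in unitmx ->
  let R := (1%:M : 'M[K]_n) *t (A *m invmx C) in
  let S := (1%:M : 'M[K]_n) *t B in
  [\/ column_W_property (R + S) (R - S),
      (R + S \in unitmx) /\ column_W_property 1%:M (invmx (R + S) *m (R - S)),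
      (R + S \in unitmx) /\ P_matrix (invmx (R + S) *m (R - S))
    | forall F1 F2 : 'M[K]_(n * n),
        nonneg_diag F1 -> nonneg_diag F2 ->
        (forall i, 0 < F1 i i + F2 i i) ->
        (R + S) *m F1 + (R - S) *m F2 \in unitmx] ->
  exists! X : 'M[K]_n, A *m X + B *m absmx (C *m X) = F.
Proof.
move=> C_unit R S conds.
have nonrev : sign_nonreversing (R + S) (R - S).
  apply: convex_col_unit_nonreversing.
  case: conds => [W | [RS_unit W] | [RS_unit PP] | diag_unit].
  - exact: column_W_convex_col_unit.
  - exact/convex_col_unit_mulKV/column_W_convex_col_unit.
  - exact/convex_col_unit_mulKV/column_W_convex_col_unit/P_matrix_column_W.
  - exact: diag_unit_convex_col_unit.
have vec_lhs X : vec (A *m X + B *m absmx (C *m X)) =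
                 R *m vec (C *m X) + S *m absmx (vec (C *m X)).
  by rewrite vecD -vec_absmx !vec_tens1mx_mul -mulmxA mulKmx.
have [y [y_sol y_uniq]] := gave_exists_unique (vec F) nonrev.
exists (invmx C *m unvec y); split.
  by apply: (can_inj (@vecK _ _)); rewrite vec_lhs mulKVmx // unvecK.
move=> X /(congr1 (@vec K n)); rewrite vec_lhs => /y_uniq ->.
by rewrite vecK mulKmx.
Qed.
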